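(* Let $d\ge1$ and $\tilde\epsilon>0$ be sufficiently small (below an absolute constant), and set $p = \frac{2}{7}\sqrt{\frac{\log(3d)}{\tilde\epsilon}}$, assumed to be a positive integer, and $\gamma = 14\sqrt{\tilde\epsilon\log(3d)}$. Let $\Sigma\in\mathbb{R}^{d\times d}$ be symmetric positive semidefinite and let $\mathbf{M} = \mathbf{M}_G+\mathbf{M}_B$ with $\mathbf{M}_G\succeq 0$, $\mathbf{M}_B\succeq0$, $\|\mathbf{M}\|_p\le(1+\tilde\epsilon)\|\Sigma\|_p$ and $(1+\tilde\epsilon)\Sigma\succeq\mathbf{M}_G\succeq(1-\tilde\epsilon)\Sigma$. Let $\mathbf{M} = \sum_{j\in[d]}\lambda_jv_jv_j^\top$ and $\Sigma = \sum_{j\in[d]}\sigma_ju_ju_j^\top$ be eigendecompositions with $\lambda_1\ge\dots\ge\lambda_d$ and $\sigma_1\ge\dots\ge\sigma_d$, and let $t\in[d]$ satisfy $\sigma_{t+1}<(1-\gamma)\sigma_1$. Then $$\max_{j\in[t]} v_j^\top\Sigma v_j\ge(1-\gamma)\|\Sigma\|_\infty.$$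
   Context: $\|\cdot\|_p$ is the Schatten-$p$ norm ($\ell_p$ norm of the eigenvalues), $\|\Sigma\|_\infty = \sigma_1$ the largest eigenvalue; $\succeq$ is the Loewner order. (If $t = d$, the condition on $\sigma_{t+1}$ is vacuous.) *)

From HB Require Import structures.
From mathcomp Require Import all_boot all_order all_algebra.
From mathcomp Require Import all_classical all_reals all_analysis.
Set Implicit Arguments. Unset Strict Implicit. Unset Printing Implicit Defensive.
Import Order.TTheory GRing.Theory Num.Theory.
Local Open Scope ring_scope.

Definition psd (R : realType) (d : nat) (A : 'M[R]_d) : Prop :=
  A^T = A /\ forall x : 'cV[R]_d, 0 <= (x^T *m A *m x) 0 0.

Definition loewner_ge (R : realType) (d : nat) (A B : 'M[R]_d) : Prop :=
  psd (A - B).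

(* A = V diag(lam) V^T with V orthogonal and lam sorted nonincreasingly:
   an eigendecomposition A = sum_j lam_j v_j v_j^T, v_j = col j V. *)
Definition eigdecomp (R : realType) (d : nat) (A V : 'M[R]_d) (lam : 'I_d -> R)
  : Prop :=
  V^T *m V = 1%:M /\ A = V *m diag_mx (\row_j lam j) *m V^T /\
  (forall i j : 'I_d, (i <= j)%N -> lam j <= lam i).

(* l_p norm of an eigenvalue vector: the Schatten-p norm of the matrix. *)
Definition lp_norm (R : realType) (d p : nat) (lam : 'I_d -> R) : R :=
  (\sum_(i < d) `|lam i| ^+ p) `^ (p%:R^-1).

From HB Require Import structures.
From mathcomp Require Import all_boot all_order all_algebra.
From mathcomp Require Import all_classical all_reals all_analysis.
From mathcomp Require Import ring lra.

(* Let P j i = <v_j, u_i>^2, a doubly stochastic matrix, and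
   x_i = (1 - eps) sigma_i.  The lower Loewner bound gives x_i <= sum_j P j i lam_j,
   so convexity of s |-> s^p yields sum_j lam_j^p >= sum_i x_i^p + G, where G is the
   P-average of the Bregman gaps lam_j^p - x_i^p - p x_i^(p-1) (lam_j - x_i).
   If the claim failed, every row j < t of P would average x below (1 - gamma) x_1,
   making the gaps of row j of order gamma lam_j^p.  Since P is doubly stochastic,
   the top-t partial sum of x^p is at most that of lam^p (bathtub principle), and
   with p gamma = 4 log(3d) the tail i >= t is negligible, whence
   sum lam^p >= (1 + gamma/21) sum x^p.  This contradicts
   sum lam^p <= (1 + eps)^p sum sigma^p, as ((1 + eps) / (1 - eps))^p is only
   about 1 + 2 p eps = 1 + 2 gamma / 49. *)

Set Implicit Arguments.
Unset Strict Implicit.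
Unset Printing Implicit Defensive.
Import Order.TTheory GRing.Theory Num.Theory.
Local Open Scope ring_scope.

Section PowerGap.
Variable R : realFieldType.
Implicit Types (a b l x y th : R) (n : nat).

Definition pow_gap n a b : R := b ^+ n.+1 - a ^+ n.+1 - n.+1%:R * a ^+ n * (b - a).

Definition gap_coef n th : R := 1 - th ^+ n * (1 + n%:R * (1 - th)).

Lemma pow_gapS n a b :
  pow_gap n.+1 a b = b * pow_gap n a b + n.+1%:R * a ^+ n * (b - a) ^+ 2.
Proof. by rewrite /pow_gap !exprS [n.+2%:R]mulrS; ring. Qed.

Lemma pow_gap_ge0 n a b : 0 <= a -> 0 <= b -> 0 <= pow_gap n a b.
Proof.
move=> a0 b0; elim: n => [|n IH]; first by rewrite /pow_gap !expr1 expr0 mulr1 mul1r subrr.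
rewrite pow_gapS; apply: addr_ge0; first exact: mulr_ge0.
by rewrite mulr_ge0 ?sqr_ge0 // mulr_ge0 ?exprn_ge0.
Qed.

Lemma pow_gap_le n x y l : 0 <= x -> x <= y -> y <= l -> pow_gap n y l <= pow_gap n x l.
Proof.
move=> x0 xy yl; have y0 : 0 <= y by exact: le_trans xy.
have -> : pow_gap n x l = pow_gap n y l + pow_gap n x y + n.+1%:R * (y ^+ n - x ^+ n) * (l - y).
  by rewrite /pow_gap !exprS; ring.
rewrite -addrA lerDl addr_ge0 ?pow_gap_ge0 // mulr_ge0 ?subr_ge0 // mulr_ge0 ?subr_ge0 //.
by rewrite lerXn2r ?nnegrE.
Qed.

Lemma pow_gap_scale n th l : pow_gap n (th * l) l = gap_coef n th * l ^+ n.+1.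
Proof. by rewrite /pow_gap /gap_coef !exprS !exprMn mulrS; ring. Qed.

Lemma gap_coef_ge0 n th : 0 <= th -> 0 <= gap_coef n th.
Proof.
move=> th0; rewrite -[gap_coef _ _]mulr1 -(expr1n _ n.+1) -pow_gap_scale mulr1.
exact: pow_gap_ge0 th0 ler01.
Qed.

Lemma pow_gap_ge_linear n th x l : 0 < th -> th <= 1 -> 0 <= x -> 0 <= l ->
  gap_coef n th * l ^+ n * (th * l - x) <= th * pow_gap n x l.
Proof.
move=> th0 th1 x0 l0.
have c0 : 0 <= gap_coef n th * l ^+ n by rewrite mulr_ge0 ?exprn_ge0 // gap_coef_ge0 // ltW.
have [hx|hx] := lerP x (th * l); last first.
  have := mulr_ge0 (ltW th0) (pow_gap_ge0 n x0 l0).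
  have : gap_coef n th * l ^+ n * (th * l - x) <= 0 by rewrite mulr_ge0_le0 // subr_le0 ltW.
  lra.
have := pow_gap_le n x0 hx (ler_piMl l0 th1); rewrite pow_gap_scale => hgap.
have : 0 <= gap_coef n th * l ^+ n * x by rewrite mulr_ge0.
have : th * (gap_coef n th * l ^+ n.+1) <= th * pow_gap n x l by rewrite ler_wpM2l // ltW.
rewrite exprSr; lra.
Qed.

Lemma bernoulli_pow n a : 0 <= a <= 1 -> 1 - n%:R * a <= (1 - a) ^+ n.
Proof.
case: n => [|n] /andP[a0 a1]; first by rewrite mul0r subr0 expr0.
have a1' : 0 <= 1 - a by lra.
have := pow_gap_ge0 n ler01 a1'; rewrite /pow_gap !expr1n mulr1; lra.
Qed.

End PowerGap.

Section Weights.
Variables (R : realFieldType) (I : finType) (w : I -> R).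
Hypothesis w_sum1 : \sum_i w i = 1.

Lemma mean_pow_add_gap_le n x (y : I -> R) : 0 <= x -> x <= \sum_i w i * y i ->
  x ^+ n.+1 + \sum_i w i * pow_gap n x (y i) <= \sum_i w i * y i ^+ n.+1.
Proof.
move=> x0 xy.
have -> : \sum_i w i * pow_gap n x (y i) = \sum_i w i * y i ^+ n.+1
    - x ^+ n.+1 - n.+1%:R * x ^+ n * (\sum_i w i * y i - x).
  transitivity (\sum_i (w i * y i ^+ n.+1 - w i * x ^+ n.+1
      - n.+1%:R * x ^+ n * (w i * y i - w i * x))).
    by apply: eq_bigr => i _; rewrite /pow_gap; ring.
  by rewrite !sumrB -mulr_sumr sumrB -!mulr_suml w_sum1 !mul1r.
have : 0 <= n.+1%:R * x ^+ n * (\sum_i w i * y i - x).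
  by rewrite mulr_ge0 ?subr_ge0 // mulr_ge0 // exprn_ge0.
lra.
Qed.

Hypothesis w_ge0 : forall i, 0 <= w i.

Lemma mean_pow_le n x (y : I -> R) : 0 <= x -> (forall i, 0 <= y i) ->
  x <= \sum_i w i * y i -> x ^+ n.+1 <= \sum_i w i * y i ^+ n.+1.
Proof.
move=> x0 y0 xy; apply: le_trans (mean_pow_add_gap_le n x0 xy); rewrite lerDl.
by apply: sumr_ge0 => i _; rewrite mulr_ge0 // pow_gap_ge0.
Qed.

Lemma mean_pow_gap_ge n (x : I -> R) l g A :
  (forall i, 0 <= x i) -> 0 <= l -> 0 < g < 1 -> 0 <= A ->
  \sum_i w i * x i <= (1 - g) * A ->
  g / 4 * gap_coef n (1 - g / 2) * (l ^+ n.+1 - ((1 - g / 4) * A) ^+ n.+1)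
    <= \sum_i w i * pow_gap n (x i) l.
Proof.
move=> x0 l0 /andP[g0 g1] A0 hmean.
set th := 1 - g / 2; set b := 1 - g / 4; set phi := gap_coef n th.
have th0 : 0 < th by rewrite /th; lra.
have phi0 : 0 <= phi by rewrite gap_coef_ge0 // ltW.
have gap0 : 0 <= \sum_i w i * pow_gap n (x i) l.
  by apply: sumr_ge0 => i _; rewrite mulr_ge0 // pow_gap_ge0.
have lin : phi * l ^+ n * (th * l - \sum_i w i * x i) <= th * \sum_i w i * pow_gap n (x i) l.
  have -> : phi * l ^+ n * (th * l - \sum_i w i * x i)
      = \sum_i w i * (phi * l ^+ n * (th * l - x i)).
    rewrite [RHS](eq_bigr (fun i => phi * l ^+ n * th * l * w i - phi * l ^+ n * (w i * x i)));
      last by move=> i _; ring.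
    by rewrite sumrB -!mulr_sumr w_sum1; ring.
  rewrite mulr_sumr; apply: ler_sum => i _; rewrite [leRHS]mulrCA; apply: ler_wpM2l => //.
  by apply: pow_gap_ge_linear => //; rewrite /th; lra.
have [hl|hl] := lerP (b * A) l; last first.
  have bA0 : 0 <= b * A by rewrite mulr_ge0 // /b; lra.
  apply: le_trans gap0; apply: mulr_ge0_le0; first by rewrite mulr_ge0 //; lra.
  by rewrite subr_le0 lerXn2r ?nnegrE // ltW.
have hA : (1 - g) * A <= b * th * l.
  apply: le_trans (_ : b * th * (b * A) <= _); last by rewrite ler_wpM2l ?mulr_ge0 // /b /th; lra.
  rewrite mulrA ler_wpM2r // /b /th; nra.
have hgain : phi * l ^+ n * (g / 4 * th * l) <= phi * l ^+ n * (th * l - \sum_i w i * x i).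
  apply: ler_wpM2l; first by rewrite mulr_ge0 // exprn_ge0.
  have -> : g / 4 * th * l = th * l - b * th * l by rewrite /b; ring.
  lra.
have : th * (g / 4 * phi * l ^+ n.+1) <= th * \sum_i w i * pow_gap n (x i) l.
  by apply: le_trans lin; apply: le_trans hgain; rewrite exprSr; lra.
rewrite ler_pM2l // => hG; apply: le_trans hG.
rewrite ler_wpM2l ?gerBl ?mulr_ge0 //; first lra.
by rewrite exprn_ge0 // mulr_ge0 // /b; lra.
Qed.

End Weights.

Section PrefixSums.
Variables (R : realFieldType) (N t : nat).
Hypothesis t_range : (0 < t <= N.+1)%N.

Lemma sum_const_le (c : R) (Q : pred 'I_N.+1) : 0 <= c -> \sum_(i | Q i) c <= N.+1%:R * c.
Proof.
move=> c0; apply: le_trans (_ : \sum_(i < N.+1) c <= _).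
  by rewrite [X in _ <= X](bigID Q) /= lerDl sumr_ge0.
by rewrite sumr_const card_ord mulr_natl.
Qed.

Lemma sum_prefixE (F : 'I_N.+1 -> R) :
  \sum_(j < N.+1 | (j < t)%N) F j = \sum_(j < N.+1) (j < t)%N%:R * F j.
Proof. by rewrite big_mkcond; apply: eq_bigr => j _; case: ifP; rewrite ?mul1r ?mul0r. Qed.

Lemma bathtub_le (f al : 'I_N.+1 -> R) :
  (forall i j : 'I_N.+1, (i <= j)%N -> f j <= f i) ->
  (forall j, 0 <= al j <= 1) ->
  \sum_j al j = \sum_(j < N.+1 | (j < t)%N) 1 ->
  \sum_j al j * f j <= \sum_(j < N.+1 | (j < t)%N) f j.
Proof.
move=> f_noninc al01 al_sum.
have ht : (t.-1 < N.+1)%N by case/andP: t_range => t0 tN; rewrite prednK.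
set c := f (Ordinal ht).
have key : 0 <= \sum_(j < N.+1) (((j < t)%N%:R - al j) * (f j - c)).
  apply: sumr_ge0 => j _; have /andP[al0 al1] := al01 j.
  case: (ltnP j t) => hj /=.
  - rewrite mulr_ge0 ?subr_ge0 // f_noninc //= -ltnS prednK //.
    by case/andP: t_range.
  - rewrite mulr_le0 ?sub0r ?oppr_le0 // subr_le0 f_noninc //=.
    exact: leq_trans (leq_pred t) hj.
rewrite sum_prefixE in al_sum; rewrite sum_prefixE.
have E : \sum_(j < N.+1) (((j < t)%N%:R - al j) * (f j - c)) =
  \sum_(j < N.+1) (j < t)%N%:R * f j - \sum_j al j * f j
  - c * (\sum_(j < N.+1) (j < t)%N%:R * 1 - \sum_j al j).
  by rewrite mulrBr !mulr_sumr -!sumrB; apply: eq_bigr => j _; ring.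
by rewrite E al_sum subrr mulr0 subr0 subr_ge0 in key.
Qed.

End PrefixSums.

Section DoublyStochastic.
Variables (R : realFieldType) (N : nat) (P : 'I_N.+1 -> 'I_N.+1 -> R).
Hypotheses (P_ge0 : forall j i, 0 <= P j i)
  (P_row : forall j, \sum_i P j i = 1) (P_col : forall i, \sum_j P j i = 1).

Lemma doubly_stochastic_prefix_le t (f y : 'I_N.+1 -> R) : (0 < t <= N.+1)%N ->
  (forall i j : 'I_N.+1, (i <= j)%N -> f j <= f i) ->
  (forall i, y i <= \sum_j P j i * f j) ->
  \sum_(i < N.+1 | (i < t)%N) y i <= \sum_(j < N.+1 | (j < t)%N) f j.
Proof.
move=> ht f_noninc hy.
pose al j := \sum_(i < N.+1 | (i < t)%N) P j i.
have al01 j : 0 <= al j <= 1.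
  rewrite sumr_ge0 //= -(P_row j) [X in _ <= X](bigID (fun i : 'I_N.+1 => (i < t)%N)) /=.
  by rewrite lerDl sumr_ge0.
have al_sum : \sum_j al j = \sum_(i < N.+1 | (i < t)%N) 1.
  by rewrite exchange_big; apply: eq_bigr => i _; rewrite P_col.
apply: le_trans (bathtub_le ht f_noninc al01 al_sum).
apply: le_trans (ler_sum _ (fun i _ => hy i)) _.
by rewrite exchange_big; under eq_bigr => j _ do rewrite -mulr_suml.
Qed.

Lemma sum_pow_add_gap_le n (x lam : 'I_N.+1 -> R) :
  (forall i, 0 <= x i) -> (forall i, x i <= \sum_j P j i * lam j) ->
  \sum_i x i ^+ n.+1 + \sum_j \sum_i P j i * pow_gap n (x i) (lam j)
    <= \sum_j lam j ^+ n.+1.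
Proof.
move=> x0 hx.
have -> : \sum_j lam j ^+ n.+1 = \sum_i \sum_j P j i * lam j ^+ n.+1.
  by rewrite exchange_big; apply: eq_bigr => j _; rewrite -mulr_suml P_row mul1r.
rewrite [X in _ + X]exchange_big -big_split /=; apply: ler_sum => i _.
exact: @mean_pow_add_gap_le _ _ _ (P_col i) n _ lam (x0 i) (hx i).
Qed.

Lemma sum_gap_ge_top_rows n t (lam x : 'I_N.+1 -> R) g A :
  0 < g < 1 -> 0 <= A -> N.+1%:R * (1 - g / 4) ^+ n.+1 <= 3^-1 ->
  (forall j, 0 <= lam j) -> (forall i, 0 <= x i) ->
  (forall j : 'I_N.+1, (j < t)%N -> \sum_i P j i * x i <= (1 - g) * A) ->
  g / 4 * gap_coef n (1 - g / 2)
      * (\sum_(j < N.+1 | (j < t)%N) lam j ^+ n.+1 - A ^+ n.+1 / 3)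
    <= \sum_j \sum_i P j i * pow_gap n (x i) (lam j).
Proof.
move=> g01 A0 tail3 lam0 x0 hrow; have /andP[g0 g1] := g01.
have c0 : 0 <= g / 4 * gap_coef n (1 - g / 2) by rewrite mulr_ge0 ?gap_coef_ge0 //; lra.
rewrite [X in _ <= X](bigID (fun j : 'I_N.+1 => (j < t)%N)) /=.
rewrite -[X in X <= _]addr0; apply: lerD; last first.
  by apply: sumr_ge0 => j _; apply: sumr_ge0 => i _; rewrite mulr_ge0 // pow_gap_ge0.
apply: le_trans (ler_sum _ (fun (j : 'I_N.+1) (hj : (j < t)%N) =>
  mean_pow_gap_ge (P_row j) (P_ge0 j) n x0 (lam0 j) g01 A0 (hrow j hj))).
rewrite -mulr_sumr sumrB ler_wpM2l // lerB //.
apply: le_trans (sum_const_le _ _) _; first by rewrite exprn_ge0 // mulr_ge0 //; lra.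
by rewrite exprMn mulrA mulrC ler_wpM2l ?exprn_ge0.
Qed.

Lemma sum_pow_le_prefix n t (lam x : 'I_N.+1 -> R) g :
  0 < g < 1 -> (0 < t <= N.+1)%N -> N.+1%:R * (1 - g) ^+ n.+1 <= 81^-1 ->
  (forall j, 0 <= lam j) -> (forall i j : 'I_N.+1, (i <= j)%N -> lam j <= lam i) ->
  (forall i, 0 <= x i) -> (forall i, x i <= \sum_j P j i * lam j) ->
  (forall i : 'I_N.+1, (t <= i)%N -> x i <= (1 - g) * x ord0) ->
  \sum_i x i ^+ n.+1 - x ord0 ^+ n.+1 / 81
    <= \sum_(j < N.+1 | (j < t)%N) lam j ^+ n.+1.
Proof.
move=> /andP[g0 g1] ht tail81 lam0 lam_noninc x0 hx htail.
have gA0 : 0 <= (1 - g) * x ord0 by rewrite mulr_ge0 //; lra.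
have pow_noninc (i j : 'I_N.+1) : (i <= j)%N -> lam j ^+ n.+1 <= lam i ^+ n.+1.
  by move=> ij; rewrite lerXn2r ?nnegrE // lam_noninc.
have hcol (i : 'I_N.+1) : x i ^+ n.+1 <= \sum_j P j i * lam j ^+ n.+1.
  exact: @mean_pow_le _ _ _ (P_col i) (P_ge0^~ i) n _ lam (x0 i) lam0 (hx i).
have := doubly_stochastic_prefix_le ht pow_noninc hcol.
rewrite [X in X - _](bigID (fun i : 'I_N.+1 => (i < t)%N)) /=.
suff : \sum_(i < N.+1 | ~~ (i < t)%N) x i ^+ n.+1 <= x ord0 ^+ n.+1 / 81 by lra.
apply: le_trans (_ : \sum_(i < N.+1 | ~~ (i < t)%N) ((1 - g) * x ord0) ^+ n.+1 <= _).
  by apply: ler_sum => i; rewrite -leqNgt => hi; rewrite lerXn2r ?nnegrE // htail.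
apply: le_trans (sum_const_le _ (exprn_ge0 _ gA0)) _.
by rewrite exprMn mulrA mulrC ler_wpM2l ?exprn_ge0.
Qed.

Lemma sum_pow_gain n t (lam x : 'I_N.+1 -> R) g :
  0 < g < 1 -> (0 < t <= N.+1)%N ->
  N.+1%:R * (1 - g) ^+ n.+1 <= 81^-1 -> N.+1%:R * (1 - g / 4) ^+ n.+1 <= 3^-1 ->
  3 / 10 <= gap_coef n (1 - g / 2) ->
  (forall j, 0 <= lam j) -> (forall i j : 'I_N.+1, (i <= j)%N -> lam j <= lam i) ->
  (forall i, 0 <= x i) -> (forall i, x i <= \sum_j P j i * lam j) ->
  (forall j : 'I_N.+1, (j < t)%N -> \sum_i P j i * x i <= (1 - g) * x ord0) ->
  (forall i : 'I_N.+1, (t <= i)%N -> x i <= (1 - g) * x ord0) ->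
  (1 + g / 21) * \sum_i x i ^+ n.+1 <= \sum_j lam j ^+ n.+1.
Proof.
move=> g01 ht tail81 tail3 phi3 lam0 lam_noninc x0 hx hrow htail.
have /andP[g0 g1] := g01.
have hrows := sum_gap_ge_top_rows g01 (x0 ord0) tail3 lam0 x0 hrow.
have hprefix := sum_pow_le_prefix g01 ht tail81 lam0 lam_noninc x0 hx htail.
have hsum := sum_pow_add_gap_le n x0 hx.
set A := x ord0 ^+ n.+1 in hrows hprefix; set X := \sum_i x i ^+ n.+1 in hprefix hsum *.
set phi := gap_coef n (1 - g / 2) in phi3 hrows.
have AX : A <= X.
  by rewrite /X (bigD1 ord0) //= lerDl; apply: sumr_ge0 => i _; rewrite exprn_ge0.
have A0 : 0 <= A by rewrite exprn_ge0.
have : g / 4 * (3 / 10) * (53 / 81 * X) <= g / 4 * phi * (X - A / 81 - A / 3).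
  by apply: ler_pM; [lra | lra | apply: ler_wpM2l; lra | lra].
have : g / 4 * phi * (X - A / 81 - A / 3)
    <= g / 4 * phi * (\sum_(j < N.+1 | (j < t)%N) lam j ^+ n.+1 - A / 3).
  by rewrite ler_wpM2l ?mulr_ge0 //; lra.
have : 0 <= g * X by rewrite mulr_ge0 //; lra.
(* [53/81 = 1 - 1/81 - 1/3] and [(1/4) (3/10) (53/81) > 1/21] *)
lra.
Qed.

End DoublyStochastic.

Section ExponentBounds.
Variable R : realType.

Lemma expR1_le3 : expR (1 : R) <= 3.
Proof.
have e0 : 0 < expR (6^-1 : R) := expR_gt0 _.
have -> : expR (1 : R) = expR 6^-1 ^+ 6 by rewrite -expRM_natr mulVf.
have e_le : expR (6^-1 : R) <= 6 / 5.
  have := expR_ge1Dx (- 6^-1 : R); rewrite expRN => h.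
  have : expR (6^-1 : R) * (expR 6^-1)^-1 = 1 by rewrite mulfV // gt_eqF.
  move: (expR (6^-1 : R)) (expR (6^-1 : R))^-1 e0 h => a b a0 h ab; nra.
have : expR (6^-1 : R) ^+ 6 <= (6 / 5) ^+ 6 by rewrite lerXn2r // nnegrE ltW.
suff : (6 / 5 : R) ^+ 6 <= 3 by lra.
by rewrite !exprS expr0; lra.
Qed.

Lemma ln_dim_ge1 (N : nat) : 1 <= ln (3 * N.+1%:R : R).
Proof.
rewrite -[X in X <= _](expRK 1) ler_ln ?posrE ?expR_gt0 ?mulr_gt0 //.
apply: le_trans expR1_le3 _.
by rewrite -[X in X <= _]mulr1 ler_wpM2l // ler1n.
Qed.

Lemma pow_le_expR (a : R) (n : nat) : 0 <= a <= 1 -> (1 - a) ^+ n <= expR (- (a * n%:R)).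
Proof.
move=> /andP[a0 a1]; rewrite -mulNr expRM_natr; apply: lerXn2r.
- by rewrite nnegrE; lra.
- by rewrite nnegrE ltW // expR_gt0.
- by have := expR_ge1Dx (- a); lra.
Qed.

Lemma one_addr_mul_expRN_le (z : R) : 3 / 2 <= z -> (1 + z) * expR (- z) <= 7 / 10.
Proof.
move=> hz; set w := z / 8.
have hw : 3 / 16 <= w by rewrite /w; lra.
have w2 : 0 <= w ^+ 2 := sqr_ge0 w.
have h8 : (1 + w) ^+ 8 <= expR z.
  have -> : expR z = expR w ^+ 8 by rewrite -expRM_natr /w; congr expR; field.
  by rewrite lerXn2r ?nnegrE ?expR_ge1Dx // ?ltW ?expR_gt0 //; lra.
have h4 : 1 + 4 * w + 6 * w ^+ 2 <= (1 + w) ^+ 4.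
  have -> : (1 + w) ^+ 4 = 1 + 4 * w + 6 * w ^+ 2 + 4 * w ^+ 3 + w ^+ 4 by ring.
  have : 0 <= w ^+ 3 by rewrite exprn_ge0 //; lra.
  have : 0 <= w ^+ 4 by rewrite exprn_ge0 //; lra.
  lra.
have h2 : (1 + 4 * w + 6 * w ^+ 2) ^+ 2 <= (1 + w) ^+ 8.
  by rewrite (_ : 8 = 4 * 2)%N // exprM lerXn2r // nnegrE; lra.
have : 10 * (1 + z) <= 7 * (1 + 4 * w + 6 * w ^+ 2) ^+ 2.
  have -> : z = 8 * w by rewrite /w; field.
  by rewrite !expr2; nra.
rewrite expRN ler_pdivrMr ?expR_gt0 //; lra.
Qed.

Lemma gap_coef_ge (n : nat) (g : R) : 0 <= g <= 2 -> 3 <= n%:R * g ->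
  3 / 10 <= gap_coef n (1 - g / 2).
Proof.
move=> /andP[g0 g2] hng; set z := n%:R * g / 2.
have hpow : (1 - g / 2) ^+ n <= expR (- z).
  rewrite (_ : z = g / 2 * n%:R); last by rewrite /z; ring.
  by apply: pow_le_expR; lra.
have : (1 - g / 2) ^+ n * (1 + z) <= expR (- z) * (1 + z).
  by rewrite ler_wpM2r // /z; lra.
have := @one_addr_mul_expRN_le z ltac:(rewrite /z; lra).
rewrite /gap_coef (_ : n%:R * (1 - (1 - g / 2)) = z) /z; last by field.
lra.
Qed.

Lemma pow_le_inv_dim (N p k : nat) (a : R) : 0 <= a <= 1 ->
  a * p%:R = k%:R * ln (3 * N.+1%:R) -> (1 - a) ^+ p <= ((3 * N.+1%:R) ^+ k)^-1.
Proof.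
move=> a01 h; apply: le_trans (pow_le_expR p a01) _.
by rewrite h expRN expRM_natl lnK // posrE mulr_gt0.
Qed.

Lemma gamma_bounds (N n : nat) (g : R) : 0 < g < 1 ->
  n.+1%:R * g = 4 * ln (3 * N.+1%:R) ->
  [/\ N.+1%:R * (1 - g) ^+ n.+1 <= 81^-1, N.+1%:R * (1 - g / 4) ^+ n.+1 <= 3^-1
    & 3 / 10 <= gap_coef n (1 - g / 2)].
Proof.
move=> /andP[g0 g1] hg; have L1 := ln_dim_ge1 N.
have D1 : (1 : R) <= N.+1%:R by rewrite ler1n.
split.
- have := @pow_le_inv_dim N n.+1 4 g ltac:(lra) ltac:(rewrite mulrC hg //).
  move/(ler_wpM2l (ler0n _ N.+1)) => /le_trans; apply.
  rewrite (_ : _ * _^-1 = (81 * N.+1%:R ^+ 3)^-1); last by field; rewrite gt_eqF // ltr0n.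
  rewrite lef_pV2 ?posrE ?mulr_gt0 ?exprn_gt0 ?ltr0n //.
  have : (1 : R) <= N.+1%:R ^+ 3 by rewrite exprn_ege1.
  lra.
- have := @pow_le_inv_dim N n.+1 1 (g / 4) ltac:(lra)
    ltac:(rewrite mulrC mulrA hg; lra).
  move/(ler_wpM2l (ler0n _ N.+1)) => /le_trans; apply.
  by rewrite expr1 invfM mulrCA mulfV ?mulr1 // pnatr_eq0.
- by apply: gap_coef_ge; [lra | move: hg; rewrite -natr1 mulrDl mul1r; lra].
Qed.

Lemma p_gamma_identities (L eps : R) (p : nat) : 0 < eps -> 0 <= L ->
  p%:R = 2 / 7 * Num.sqrt (L / eps) ->
  p%:R * (14 * Num.sqrt (eps * L)) = 4 * L /\
  p%:R * eps = 14 * Num.sqrt (eps * L) / 49.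
Proof.
move=> e0 L0 ->; set q := Num.sqrt (L / eps).
have q2 : q ^+ 2 = L / eps by rewrite sqr_sqrtr // divr_ge0 // ltW.
have -> : Num.sqrt (eps * L) = eps * q.
  rewrite -[eps * L](_ : eps ^+ 2 * (L / eps) = _); last by field; rewrite gt_eqF.
  by rewrite sqrtrM ?sqr_ge0 // sqrtr_sqr gtr0_norm.
split; last by field.
rewrite (_ : 2 / 7 * q * (14 * (eps * q)) = 4 * eps * q ^+ 2); last by field.
by rewrite q2; field; rewrite gt_eqF.
Qed.

Lemma pow_ratio_bernoulli (p : nat) (eps : R) : 0 <= eps <= 1 ->
  (1 - 2 * (p%:R * eps)) * (1 + eps) ^+ p <= (1 - eps) ^+ p.
Proof.
move=> /andP[e0 e1]; set a := 2 * eps / (1 + eps).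
have a01 : 0 <= a <= 1 by rewrite divr_ge0 ?ler_pdivrMr /=; lra.
have -> : 1 - eps = (1 + eps) * (1 - a) by rewrite /a; field; lra.
rewrite exprMn mulrC; apply: ler_wpM2l; first by rewrite exprn_ge0 //; lra.
have := bernoulli_pow p a01.
suff : p%:R * a <= 2 * (p%:R * eps) by lra.
rewrite /a mulrA ler_pdivrMr; last lra.
have : 0 <= p%:R * eps by rewrite mulr_ge0.
nra.
Qed.

Lemma no_pow_gain_within_distortion (p : nat) (eps g S Y : R) :
  0 <= eps <= 1 -> 0 < g < 1 -> p%:R * eps = g / 49 -> 0 < S ->
  (1 + g / 21) * ((1 - eps) ^+ p * S) <= Y -> Y <= (1 + eps) ^+ p * S -> False.
Proof.
move=> e01 /andP[g0 g1] heps S0 gain hY.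
have := pow_ratio_bernoulli p e01; rewrite heps => bern.
have a0 : 0 < (1 + eps) ^+ p by case/andP: e01 => e0 _; rewrite exprn_gt0 //; lra.
have : (1 + g / 21) * ((1 - 2 * (g / 49)) * (1 + eps) ^+ p * S)
    <= (1 + g / 21) * ((1 - eps) ^+ p * S).
  by apply: ler_wpM2l; [lra | rewrite ler_wpM2r // ltW].
(* [(1 + g/21) (1 - 2g/49) = 1 + g (7 - 2g) / 1029 > 1] *)
have : 0 < (1 + eps) ^+ p * S * (g * (7 - 2 * g)) by rewrite !mulr_gt0 //; lra.
lra.
Qed.

Lemma lp_norm_le_sum_pow (d p : nat) (c : R) (lam sig : 'I_d -> R) :
  (0 < p)%N -> 0 <= c -> (forall j, 0 <= lam j) -> (forall i, 0 <= sig i) ->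
  lp_norm p lam <= c * lp_norm p sig ->
  \sum_j lam j ^+ p <= c ^+ p * \sum_i sig i ^+ p.
Proof.
move=> p0 c0 lam0 sig0; rewrite /lp_norm.
under eq_bigr => j _ do rewrite ger0_norm //.
under [X in _ <= _ * X `^ _ -> _]eq_bigr => j _ do rewrite ger0_norm //.
set a := \sum_j lam j ^+ p; set b := \sum_i sig i ^+ p.
have a0 : 0 <= a by apply: sumr_ge0 => j _; rewrite exprn_ge0.
have b0 : 0 <= b by apply: sumr_ge0 => j _; rewrite exprn_ge0.
have pn : (p%:R : R) != 0 by rewrite pnatr_eq0 -lt0n.
move/(@ge0_ler_powR R p%:R (ler0n _ _)).
rewrite -powRrM mulVf // powRr1 // powRM ?powR_ge0 //.
rewrite -powRrM mulVf // powRr1 // powR_mulrn //.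
by apply; rewrite nnegrE ?powR_ge0 // mulr_ge0 ?powR_ge0.
Qed.

End ExponentBounds.

Section QuadraticForm.
Variables (R : realType) (d : nat).
Implicit Types (A B U V : 'M[R]_d) (w : 'cV[R]_d).

Definition quad A w : R := (w^T *m A *m w) 0 0.

Lemma quadD A B w : quad (A + B) w = quad A w + quad B w.
Proof. by rewrite /quad mulmxDr mulmxDl mxE. Qed.

Lemma quadZ (a : R) A w : quad (a *: A) w = a * quad A w.
Proof. by rewrite /quad -scalemxAr -scalemxAl mxE. Qed.

Lemma quadB A B w : quad (A - B) w = quad A w - quad B w.
Proof. by rewrite -scaleN1r quadD quadZ mulN1r. Qed.

Lemma loewner_ge_quad A B w : loewner_ge A B -> quad B w <= quad A w.
Proof. by move=> [_ /(_ w)]; rewrite -/(quad _ _) quadB subr_ge0. Qed.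

Lemma quad_eigdecomp_col A V (lam : 'I_d -> R) U i : eigdecomp A V lam ->
  quad A (col i U) = \sum_k lam k * ((V^T *m U) k i) ^+ 2.
Proof.
move=> [_ [-> _]]; rewrite /quad.
have -> : (col i U)^T *m (V *m diag_mx (\row_j lam j) *m V^T) *m col i U
    = (V^T *m col i U)^T *m diag_mx (\row_j lam j) *m (V^T *m col i U).
  by rewrite trmx_mul trmxK !mulmxA.
have -> : V^T *m col i U = col i (V^T *m U) by rewrite !colE mulmxA.
rewrite mul_mx_diag !mxE; apply: eq_bigr => k _; rewrite !mxE; ring.
Qed.

Lemma mulTmx_swap U V k i : (U^T *m V) k i = (V^T *m U) i k.
Proof. by rewrite -[U^T *m V]trmxK trmx_mul trmxK mxE. Qed.

Lemma quad_eigdecomp_eigvec A V (lam : 'I_d -> R) i : eigdecomp A V lam ->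
  quad A (col i V) = lam i.
Proof.
move=> hA; rewrite (quad_eigdecomp_col V i hA) (bigD1 i) //= big1 ?addr0.
  by rewrite hA.1 mxE eqxx expr1n mulr1.
by move=> k hk; rewrite hA.1 mxE (negbTE hk) expr0n mulr0.
Qed.

Lemma orthogonal_sq_sums V U : V^T *m V = 1%:M -> U^T *m U = 1%:M ->
  (forall j, \sum_i ((V^T *m U) j i) ^+ 2 = 1) /\
  (forall i, \sum_j ((V^T *m U) j i) ^+ 2 = 1).
Proof.
move=> hV hU; have hV' : V *m V^T = 1%:M by exact: mulmx1C.
have hU' : U *m U^T = 1%:M by exact: mulmx1C.
split=> [j|i].
- have : ((V^T *m U) *m (V^T *m U)^T) j j = 1.
    by rewrite trmx_mul trmxK mulmxA -(mulmxA _ U) hU' mulmx1 hV mxE eqxx.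
  by rewrite mxE => <-; apply: eq_bigr => i _; rewrite !mxE expr2.
- have : ((V^T *m U)^T *m (V^T *m U)) i i = 1.
    by rewrite trmx_mul trmxK mulmxA -(mulmxA _ V) hV' mulmx1 hU mxE eqxx.
  by rewrite mxE => <-; apply: eq_bigr => j _; rewrite !mxE expr2.
Qed.

Lemma eigval_le_overlap_mean (c : R) A B C M V U (lam sigma : 'I_d -> R) i :
  eigdecomp M V lam -> eigdecomp C U sigma -> M = A + B -> psd B ->
  loewner_ge A (c *: C) ->
  c * sigma i <= \sum_j ((V^T *m U) j i) ^+ 2 * lam j.
Proof.
move=> hMV hCU hM hB hAC.
have -> : \sum_j ((V^T *m U) j i) ^+ 2 * lam j = quad M (col i U).
  by rewrite (quad_eigdecomp_col U i hMV); apply: eq_bigr => j _; rewrite mulrC.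
rewrite -(quad_eigdecomp_eigvec i hCU) -quadZ hM quadD.
have := loewner_ge_quad (col i U) hAC; have := hB.2 (col i U); rewrite -/(quad _ _).
lra.
Qed.

End QuadraticForm.

Lemma doubly_stochastic_top_row_ge (R : realType) (N n t : nat)
    (P : 'I_N.+1 -> 'I_N.+1 -> R) (lam sigma : 'I_N.+1 -> R) (eps g : R) :
  (forall j i, 0 <= P j i) -> (forall j, \sum_i P j i = 1) -> (forall i, \sum_j P j i = 1) ->
  0 <= eps < 1 -> 0 < g ->
  n.+1%:R * g = 4 * ln (3 * N.+1%:R) -> n.+1%:R * eps = g / 49 ->
  (forall j, 0 <= lam j) -> (forall i j : 'I_N.+1, (i <= j)%N -> lam j <= lam i) ->
  (forall i, 0 <= sigma i) -> (forall i j : 'I_N.+1, (i <= j)%N -> sigma j <= sigma i) ->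
  (0 < t <= N.+1)%N ->
  (forall k : 'I_N.+1, nat_of_ord k = t -> sigma k < (1 - g) * sigma ord0) ->
  (forall i, (1 - eps) * sigma i <= \sum_j P j i * lam j) ->
  \sum_j lam j ^+ n.+1 <= (1 + eps) ^+ n.+1 * \sum_i sigma i ^+ n.+1 ->
  exists2 j : 'I_N.+1, (j < t)%N & (1 - g) * sigma ord0 <= \sum_i P j i * sigma i.
Proof.
move=> P0 Prow Pcol /andP[e0 e1] g0 hg heps lam0 lam_noninc sig0 sig_noninc ht hsig_t
  hcover hnorm.
have [hneg|hpos] := lerP ((1 - g) * sigma ord0) 0.
  exists ord0; first by case/andP: ht.
  by apply: le_trans hneg (sumr_ge0 _ _) => i _; rewrite mulr_ge0.
have g1 : g < 1 by have := sig0 ord0; nra.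
have g01 : 0 < g < 1 by rewrite g0.
have [tail81 tail3 phi3] := gamma_bounds g01 hg.
have [//|none] := pselect (exists2 j : 'I_N.+1, (j < t)%N &
  (1 - g) * sigma ord0 <= \sum_i P j i * sigma i).
exfalso; pose x i := (1 - eps) * sigma i.
have x0 i : 0 <= x i by rewrite mulr_ge0 //; lra.
have hrow (j : 'I_N.+1) : (j < t)%N -> \sum_i P j i * x i <= (1 - g) * x ord0.
  move=> hj; rewrite /x mulrCA.
  under eq_bigr => i _ do rewrite mulrCA.
  rewrite -mulr_sumr; apply: ler_wpM2l; first lra.
  by rewrite leNgt; apply/negP => h; apply: none; exists j => //; rewrite ltW.
have htail (i : 'I_N.+1) : (t <= i)%N -> x i <= (1 - g) * x ord0.
  move=> hi; have tN : (t < N.+1)%N by apply: leq_trans (ltn_ord i).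
  rewrite /x mulrCA; apply: ler_wpM2l; first lra.
  have := sig_noninc (Ordinal tN) i hi; have := hsig_t (Ordinal tN) erefl; lra.
have gain := sum_pow_gain P0 Prow Pcol g01 ht tail81 tail3 phi3 lam0 lam_noninc x0 hcover
  hrow htail.
set S := \sum_i sigma i ^+ n.+1 in hnorm.
have hX : \sum_i x i ^+ n.+1 = (1 - eps) ^+ n.+1 * S.
  by rewrite mulr_sumr; apply: eq_bigr => i _; rewrite exprMn.
rewrite hX in gain.
have S0 : 0 < S.
  have s0 : 0 < sigma ord0 by have := sig0 ord0; nra.
  have rest : 0 <= \sum_(i | i != ord0) sigma i ^+ n.+1.
    by apply: sumr_ge0 => i _; rewrite exprn_ge0.
  by rewrite /S (bigD1 ord0) //= ltr_pwDl // exprn_gt0.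
have e01 : 0 <= eps <= 1 by rewrite e0 /=; lra.
exact: (no_pow_gain_within_distortion e01 g01 heps S0 gain hnorm).
Qed.

(* d = n.+1 >= 1; indices are 0-based: j : 'I_d stands for j+1 in [d]. *)
Theorem proposition4 (R : realType) :
  exists c : R, 0 < c /\
  forall (n : nat) (eps : R) (p t : nat)
    (Sigma M MG MB V U : 'M[R]_n.+1) (lam sigma : 'I_n.+1 -> R),
  0 < eps -> eps < c ->
  (0 < p)%N ->
  p%:R = 2 / 7 * Num.sqrt (ln (3 * n.+1%:R) / eps) ->
  let gamma := 14 * Num.sqrt (eps * ln (3 * n.+1%:R)) in
  psd Sigma ->
  M = MG + MB ->
  psd MG -> psd MB ->
  eigdecomp M V lam ->
  eigdecomp Sigma U sigma ->
  lp_norm p lam <= (1 + eps) * lp_norm p sigma ->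
  loewner_ge ((1 + eps) *: Sigma) MG ->
  loewner_ge MG ((1 - eps) *: Sigma) ->
  (0 < t <= n.+1)%N ->
  (forall k : 'I_n.+1, nat_of_ord k = t -> sigma k < (1 - gamma) * sigma ord0) ->
  exists2 j : 'I_n.+1, (j < t)%N &
    ((col j V)^T *m Sigma *m col j V) 0 0 >= (1 - gamma) * sigma ord0.
Proof.
exists 1; split => // n eps p t Sigma M MG MB V U lam sigma e0 e1 p0 hp gamma
  hS hM hMG hMB hMV hSU hnorm _ hlow ht hsig_t.
have L1 := ln_dim_ge1 R n.
have [pg peps] := p_gamma_identities e0 (le_trans ler01 L1) hp.
have g0 : 0 < gamma by rewrite mulr_gt0 // sqrtr_gt0 mulr_gt0 // (lt_le_trans ltr01 L1).
pose P j i := ((V^T *m U) j i) ^+ 2.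
have [Prow Pcol] := orthogonal_sq_sums hMV.1 hSU.1.
have lam0 j : 0 <= lam j.
  by rewrite -(quad_eigdecomp_eigvec j hMV) hM quadD addr_ge0 ?hMG.2 ?hMB.2.
have sig0 i : 0 <= sigma i by rewrite -(quad_eigdecomp_eigvec i hSU) hS.2.
have hcover i := eigval_le_overlap_mean i hMV hSU hM hMB hlow.
have e01 : 0 <= eps < 1 by rewrite ltW //=; lra.
have hpow := lp_norm_le_sum_pow p0 (ltW (ltr_wpDr (ltW e0) ltr01)) lam0 sig0 hnorm.
case: p p0 hp hnorm hpow pg peps => // m _ _ _ hpow pg peps.
have [j jt hj] := doubly_stochastic_top_row_ge (fun j i => sqr_ge0 _) Prow Pcol
  e01 g0 pg peps lam0 hMV.2.2 sig0 hSU.2.2 ht hsig_t hcover hpow.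
exists j => //; change ((1 - gamma) * sigma ord0 <= quad Sigma (col j V)).
suff -> : quad Sigma (col j V) = \sum_i P j i * sigma i by [].
rewrite (quad_eigdecomp_col V j hSU); apply: eq_bigr => i _.
by rewrite mulrC mulTmx_swap.
Qed.
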